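(* For all $n\geq1$ and every $2$-homogeneous polynomial $P(x)=\sum_{|\alpha|=2}a_\alpha\mathbf{x}^\alpha$ on $\ell_2^n$ over the complex field, \[ \max_{|\alpha|=2}|a_\alpha|\leq\frac{4}{\sqrt\pi}\|P\|. \] Moreover, for every $r<\infty$ there is no constant $C\ge1$ independent of $n$ such that $\big(\sum_{|\alpha|=2}|a_\alpha|^r\big)^{1/r}\le C\|P\|$ for all complex $2$-homogeneous polynomials $P$ on $\ell_2^n$ and all $n$.
   Context: For $\alpha\in\mathbb{N}^n$, $|\alpha|=\alpha_1+\cdots+\alpha_n$ and $\mathbf{x}^\alpha=x_1^{\alpha_1}\cdots x_n^{\alpha_n}$. $\ell_2^n$ is $\mathbb{C}^n$ with the Euclidean norm, and $\|P\|=\sup\{|P(x)|:\|x\|_2\le1\}$. *)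

From Stdlib Require Import Reals.
Open Scope R_scope.

Definition Cplx := (R * R)%type.
Definition C0 : Cplx := (0, 0).
Definition Cadd (z w : Cplx) : Cplx := (fst z + fst w, snd z + snd w).
Definition Cmul (z w : Cplx) : Cplx :=
  (fst z * fst w - snd z * snd w, fst z * snd w + snd z * fst w).
Definition Cmod (z : Cplx) : R := sqrt (fst z ^ 2 + snd z ^ 2).

Fixpoint Csum (n : nat) (f : nat -> Cplx) : Cplx :=
  match n with O => C0 | S k => Cadd (Csum k f) (f k) end.
Fixpoint Rsum (n : nat) (f : nat -> R) : R :=
  match n with O => 0 | S k => Rsum k f + f k end.

(* A 2-homogeneous polynomial on C^n: multi-indices alpha with |alpha| = 2
   correspond bijectively to pairs (i,j) with i <= j < n, x^alpha = x_i x_j.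
   The coefficient a_alpha is  a i j  (values of a at other pairs are ignored). *)
Definition hom2 (n : nat) (a : nat -> nat -> Cplx) (x : nat -> Cplx) : Cplx :=
  Csum n (fun i => Csum n (fun j =>
    if Nat.leb i j then Cmul (a i j) (Cmul (x i) (x j)) else C0)).

Definition in_unit_ball (n : nat) (x : nat -> Cplx) : Prop :=
  Rsum n (fun i => Cmod (x i) ^ 2) <= 1.

Definition is_Pnorm (n : nat) (a : nat -> nat -> Cplx) (N : R) : Prop :=
  is_lub (fun t => exists x, in_unit_ball n x /\ t = Cmod (hom2 n a x)) N.

Definition rpow (t r : R) : R := if Rlt_dec 0 t then Rpower t r else 0.

Definition coef_lr (n : nat) (a : nat -> nat -> Cplx) (r : R) : R :=
  rpow (Rsum n (fun i => Rsum n (fun j =>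
          if Nat.leb i j then rpow (Cmod (a i j)) r else 0))) (1 / r).

(** The bound comes from polarization: testing [P] at the unit vectors [e_i] gives
    [|a_ii| <= ||P||], and testing it at [(e_i + e_j)/sqrt 2] and [(e_i - e_j)/sqrt 2]
    isolates [a_ij] as the difference of the two values, so [|a_ij| <= 2 ||P||].
    Since [pi <= 4], [2 <= 4/sqrt pi].  For the second part, [P(x) = x_1^2 + ... + x_n^2]
    has norm [1] while the [l_r] norm of its coefficients is [n^(1/r)], which is unbounded. *)

From Stdlib Require Import Reals Lra Lia.
From Coquelicot Require Complex.
Open Scope R_scope.

Ltac Cring := apply injective_projections; unfold Cadd, Cmul, C0; simpl; ring.

Lemma Cmod_ge0 (z : Cplx) : 0 <= Cmod z.
Proof. apply sqrt_pos. Qed.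

Lemma Cmod_C0 : Cmod C0 = 0.
Proof. exact Complex.Cmod_0. Qed.

Lemma Cmod_real (s : R) : 0 <= s -> Cmod (s, 0) = s.
Proof.
  intro Hs; unfold Cmod; simpl.
  replace (s * (s * 1) + 0 * (0 * 1)) with (s * s) by ring.
  exact (sqrt_square s Hs).
Qed.

Lemma Cmod_sqr (z : Cplx) : Cmod z ^ 2 = fst z ^ 2 + snd z ^ 2.
Proof. unfold Cmod; rewrite <- Rsqr_pow2; apply Rsqr_sqrt; nra. Qed.

Lemma Cmod_mul (z w : Cplx) : Cmod (Cmul z w) = Cmod z * Cmod w.
Proof. exact (Complex.Cmod_mult z w). Qed.

Lemma Cmod_add_le (z w : Cplx) : Cmod (Cadd z w) <= Cmod z + Cmod w.
Proof. exact (Complex.Cmod_triangle z w). Qed.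

Lemma Cmod_sub_le (z w : Cplx) : Cmod (Cadd z (Complex.Copp w)) <= Cmod z + Cmod w.
Proof.
  eapply Rle_trans; [apply Cmod_add_le|]; right; f_equal; exact (Complex.Cmod_opp w).
Qed.

Lemma Rsum_ext n f g : (forall k, (k < n)%nat -> f k = g k) -> Rsum n f = Rsum n g.
Proof. induction n as [|n IH]; intro H; simpl; [easy|]. rewrite IH, H; auto. Qed.

Lemma Rsum_eq0 n f : (forall k, (k < n)%nat -> f k = 0) -> Rsum n f = 0.
Proof.
  intro H; rewrite (Rsum_ext n f (fun _ => 0)) by auto; clear H.
  induction n; simpl; lra.
Qed.

Lemma Rsum_single n f i : (i < n)%nat ->
  (forall k, (k < n)%nat -> k <> i -> f k = 0) -> Rsum n f = f i.
Proof.
  induction n as [|n IH]; intros Hi H; [lia|]; simpl.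
  destruct (Nat.eq_dec n i) as [->|Hni].
  - rewrite Rsum_eq0 by (intros; apply H; lia); ring.
  - rewrite IH, (H n) by (try lia; intros; apply H; lia); ring.
Qed.

Lemma Rsum_pair n f i j : (i < j)%nat -> (j < n)%nat ->
  (forall k, (k < n)%nat -> k <> i -> k <> j -> f k = 0) -> Rsum n f = f i + f j.
Proof.
  induction n as [|n IH]; intros Hij Hj H; [lia|]; simpl.
  destruct (Nat.eq_dec n j) as [->|Hnj].
  - rewrite (Rsum_single j f i) by (try lia; intros; apply H; lia); ring.
  - rewrite IH, (H n) by (try lia; intros; apply H; lia); ring.
Qed.

Lemma Rsum_const1 n : Rsum n (fun _ => 1) = INR n.
Proof. induction n as [|n IH]; simpl Rsum; [simpl; ring|]. rewrite IH, S_INR; ring. Qed.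

Lemma Csum_components n f :
  Csum n f = (Rsum n (fun k => fst (f k)), Rsum n (fun k => snd (f k))).
Proof. induction n as [|n IH]; simpl; [easy|]. now rewrite IH. Qed.

Lemma Csum_ext n f g : (forall k, (k < n)%nat -> f k = g k) -> Csum n f = Csum n g.
Proof.
  intro H; rewrite !Csum_components.
  f_equal; apply Rsum_ext; intros k Hk; now rewrite H.
Qed.

Lemma Csum_single n f i : (i < n)%nat ->
  (forall k, (k < n)%nat -> k <> i -> f k = C0) -> Csum n f = f i.
Proof.
  intros Hi H; rewrite Csum_components, !(Rsum_single n _ i Hi)
    by (intros k Hk Hki; now rewrite H).
  now destruct (f i).
Qed.

Lemma Csum_pair n f i j : (i < j)%nat -> (j < n)%nat ->
  (forall k, (k < n)%nat -> k <> i -> k <> j -> f k = C0) -> Csum n f = Cadd (f i) (f j).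
Proof.
  intros Hij Hj H; rewrite Csum_components, !(Rsum_pair n _ i j Hij Hj)
    by (intros k Hk Hki Hkj; now rewrite H).
  reflexivity.
Qed.

Lemma Cmod_Csum_le n f : Cmod (Csum n f) <= Rsum n (fun k => Cmod (f k)).
Proof.
  induction n as [|n IH]; simpl; [rewrite Cmod_C0; lra|].
  eapply Rle_trans; [apply Cmod_add_le | lra].
Qed.

Section QuadraticForm.

Variables (n : nat) (a : nat -> nat -> Cplx).

Lemma hom2_row_eq0 x k : x k = C0 ->
  Csum n (fun l => if Nat.leb k l then Cmul (a k l) (Cmul (x k) (x l)) else C0) = C0.
Proof.
  intro Hk; rewrite Csum_components, !Rsum_eq0; [easy| |];
    intros l _; destruct (Nat.leb k l); rewrite ?Hk; simpl; ring.
Qed.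

Lemma hom2_support1 x i : (i < n)%nat -> (forall k, k <> i -> x k = C0) ->
  hom2 n a x = Cmul (a i i) (Cmul (x i) (x i)).
Proof.
  intros Hi Hx; unfold hom2.
  rewrite (Csum_single n _ i Hi) by (intros k _ Hk; apply hom2_row_eq0; auto).
  rewrite (Csum_single n _ i Hi), Nat.leb_refl; [easy|].
  intros k _ Hk; destruct (Nat.leb i k); [rewrite (Hx k Hk); Cring | easy].
Qed.

Lemma hom2_support2 x i j : (i < j)%nat -> (j < n)%nat ->
  (forall k, k <> i -> k <> j -> x k = C0) ->
  hom2 n a x = Cadd (Cadd (Cmul (a i i) (Cmul (x i) (x i)))
                          (Cmul (a i j) (Cmul (x i) (x j))))
                    (Cmul (a j j) (Cmul (x j) (x j))).
Proof.
  intros Hij Hj Hx; unfold hom2.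
  rewrite (Csum_pair n _ i j Hij Hj)
    by (intros k _ Hki Hkj; apply hom2_row_eq0; auto).
  rewrite (Csum_pair n _ i j Hij Hj).
  2:{ intros k _ Hki Hkj; destruct (Nat.leb i k); [rewrite (Hx k Hki Hkj); Cring | easy]. }
  rewrite (Csum_single n _ j Hj).
  2:{ intros k _ Hkj; destruct (Nat.eq_dec k i) as [->|Hki].
      - now rewrite (proj2 (Nat.leb_gt j i) Hij).
      - destruct (Nat.leb j k); [rewrite (Hx k Hki Hkj); Cring | easy]. }
  now rewrite !Nat.leb_refl, (proj2 (Nat.leb_le i j) (Nat.lt_le_incl _ _ Hij)).
Qed.

Lemma Pnorm_ub N x : is_Pnorm n a N -> in_unit_ball n x -> Cmod (hom2 n a x) <= N.
Proof. intros [Hub _] Hx; apply Hub; eauto. Qed.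

End QuadraticForm.

Definition unit_vec (i k : nat) : Cplx := if Nat.eqb k i then (1, 0) else C0.

Definition pair_vec (i j : nat) (u v : Cplx) (k : nat) : Cplx :=
  if Nat.eqb k i then u else if Nat.eqb k j then v else C0.

Lemma unit_vec_neq i k : k <> i -> unit_vec i k = C0.
Proof. intro H; unfold unit_vec; now rewrite (proj2 (Nat.eqb_neq k i) H). Qed.

Lemma unit_vec_in_ball n i : (i < n)%nat -> in_unit_ball n (unit_vec i).
Proof.
  intro Hi; unfold in_unit_ball.
  rewrite (Rsum_single n _ i Hi) by (intros k _ Hk; rewrite unit_vec_neq, Cmod_C0 by easy; ring).
  unfold unit_vec; rewrite Nat.eqb_refl, Cmod_real; lra.
Qed.

Lemma pair_vec_in_ball n i j (u v : Cplx) : (i < j)%nat -> (j < n)%nat ->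
  Cmod u ^ 2 + Cmod v ^ 2 <= 1 -> in_unit_ball n (pair_vec i j u v).
Proof.
  intros Hij Hj Huv; unfold in_unit_ball, pair_vec.
  rewrite (Rsum_pair n _ i j Hij Hj).
  - now rewrite Nat.eqb_refl, (proj2 (Nat.eqb_neq j i)), Nat.eqb_refl by lia.
  - intros k _ Hki Hkj.
    rewrite (proj2 (Nat.eqb_neq k i) Hki), (proj2 (Nat.eqb_neq k j) Hkj), Cmod_C0; ring.
Qed.

Lemma coef_diag_le n a N i : is_Pnorm n a N -> (i < n)%nat -> Cmod (a i i) <= N.
Proof.
  intros HN Hi.
  pose proof (Pnorm_ub n a N _ HN (unit_vec_in_ball n i Hi)) as H.
  rewrite (hom2_support1 n a _ i Hi) in H by (intros; now apply unit_vec_neq).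
  unfold unit_vec in H; rewrite Nat.eqb_refl, !Cmod_mul, Cmod_real in H; lra.
Qed.

Lemma coef_offdiag_le n a N i j : is_Pnorm n a N -> (i < j)%nat -> (j < n)%nat ->
  Cmod (a i j) <= 2 * N.
Proof.
  intros HN Hij Hj.
  set (s := sqrt (/ 2)).
  assert (Hss : s * s = / 2) by (apply sqrt_sqrt; lra).
  set (x sg := pair_vec i j (s, 0) (sg * s, 0)).
  assert (Hx : forall sg, sg * sg = 1 -> Cmod (hom2 n a (x sg)) <= N).
  { intros sg Hsg; apply Pnorm_ub; [easy|].
    apply pair_vec_in_ball; [easy | easy|].
    rewrite !Cmod_sqr; simpl; nra. }
  assert (Hpolar : Cadd (hom2 n a (x 1)) (Complex.Copp (hom2 n a (x (-1)))) = a i j).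
  { assert (Hsupp : forall sg k, k <> i -> k <> j -> x sg k = C0).
    { intros sg k Hki Hkj; unfold x, pair_vec.
      now rewrite (proj2 (Nat.eqb_neq k i) Hki), (proj2 (Nat.eqb_neq k j) Hkj). }
    rewrite !(hom2_support2 n a _ i j Hij Hj) by apply Hsupp.
    unfold x, pair_vec; rewrite !Nat.eqb_refl, (proj2 (Nat.eqb_neq j i)) by lia.
    transitivity (Cmul (2 * (s * s), 0) (a i j)); [Cring|].
    rewrite Hss; replace (2 * / 2) with 1 by field; Cring. }
  pose proof (Cmod_sub_le (hom2 n a (x 1)) (hom2 n a (x (-1)))) as Htri.
  rewrite Hpolar in Htri.
  pose proof (Hx 1 ltac:(ring)); pose proof (Hx (-1) ltac:(ring)); lra.
Qed.

Lemma coef_le_2Pnorm n a N i j : is_Pnorm n a N -> (i <= j)%nat -> (j < n)%nat ->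
  Cmod (a i j) <= 2 * N.
Proof.
  intros HN Hij Hj.
  pose proof (Cmod_ge0 (a j j)); pose proof (coef_diag_le n a N j HN Hj).
  destruct (Nat.eq_dec i j) as [->|Hne]; [lra|].
  apply (coef_offdiag_le n); auto; lia.
Qed.

Lemma two_le_4_div_sqrt_PI : 2 <= 4 / sqrt PI.
Proof.
  pose proof PI_RGT_0; pose proof PI_4.
  assert (Hpos : 0 < sqrt PI) by (apply sqrt_lt_R0; lra).
  assert (Hle : sqrt PI <= 2).
  { rewrite <- (sqrt_square 2) by lra; apply sqrt_le_1_alt; lra. }
  apply (Rmult_le_reg_r (sqrt PI)); [easy|].
  unfold Rdiv; rewrite Rmult_assoc, Rinv_l by lra; lra.
Qed.

Definition sum_squares_coef (i j : nat) : Cplx := if Nat.eqb i j then (1, 0) else C0.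

Lemma hom2_sum_squares n x :
  hom2 n sum_squares_coef x = Csum n (fun i => Cmul (x i) (x i)).
Proof.
  unfold hom2; apply Csum_ext; intros i Hi.
  rewrite (Csum_single n _ i Hi), Nat.leb_refl.
  - unfold sum_squares_coef; rewrite Nat.eqb_refl; Cring.
  - intros k _ Hk; unfold sum_squares_coef.
    rewrite (proj2 (Nat.eqb_neq i k)) by auto; destruct (Nat.leb i k); [Cring | easy].
Qed.

Lemma Pnorm_sum_squares n : (1 <= n)%nat -> is_Pnorm n sum_squares_coef 1.
Proof.
  intro Hn; split.
  - intros t [x [Hx ->]]; rewrite hom2_sum_squares.
    eapply Rle_trans; [apply Cmod_Csum_le|].
    eapply Rle_trans; [|apply Hx]; right.
    apply Rsum_ext; intros k _; rewrite Cmod_mul; ring.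
  - intros b Hb; apply Hb; exists (unit_vec 0); split; [now apply unit_vec_in_ball|].
    rewrite hom2_sum_squares, (Csum_single n _ 0) by
      (try lia; intros k _ Hk; rewrite unit_vec_neq by easy; Cring).
    unfold unit_vec; simpl; rewrite Cmod_mul, Cmod_real; lra.
Qed.

Lemma coef_lr_sum_squares n r : (1 <= n)%nat ->
  coef_lr n sum_squares_coef r = Rpower (INR n) (1 / r).
Proof.
  intro Hn; unfold coef_lr.
  rewrite (Rsum_ext n _ (fun _ => 1)), Rsum_const1.
  - unfold rpow; destruct (Rlt_dec 0 (INR n)) as [|Hle]; [easy|].
    exfalso; apply Hle, lt_0_INR; lia.
  - intros i Hi; rewrite (Rsum_single n _ i Hi).
    + rewrite Nat.leb_refl; unfold sum_squares_coef; rewrite Nat.eqb_refl, Cmod_real by lra.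
      unfold rpow; destruct (Rlt_dec 0 1); [|lra].
      unfold Rpower; rewrite ln_1, Rmult_0_r; apply exp_0.
    + intros k _ Hk; unfold sum_squares_coef; rewrite (proj2 (Nat.eqb_neq i k)) by auto.
      destruct (Nat.leb i k); [|easy]; rewrite Cmod_C0; unfold rpow.
      destruct (Rlt_dec 0 0); [lra | easy].
Qed.

Lemma exists_nat_gt (t : R) : exists n : nat, (1 <= n)%nat /\ t < INR n.
Proof.
  destruct (INR_unbounded t) as [n Hn].
  exists (S n); split; [lia|]; rewrite S_INR; lra.
Qed.

Lemma Rpower_root_lt (c t r : R) : 0 < c -> 0 < r -> Rpower c r < t -> c < Rpower t (1 / r).
Proof.
  intros Hc Hr Hlt.
  assert (H : Rpower (Rpower c r) (1 / r) < Rpower t (1 / r)).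
  { apply Rlt_Rpower_l; [apply Rdiv_lt_0_compat; lra | split; [apply exp_pos | easy]]. }
  rewrite Rpower_mult in H; replace (r * (1 / r)) with 1 in H by (field; lra).
  now rewrite Rpower_1 in H.
Qed.

Theorem proposition3 :
  (forall (n : nat) (a : nat -> nat -> Cplx) (N : R),
      (1 <= n)%nat -> is_Pnorm n a N ->
      forall i j : nat, (i <= j)%nat -> (j < n)%nat ->
        Cmod (a i j) <= 4 / sqrt PI * N)
  /\
  (forall r : R, 0 < r ->
     ~ (exists Cst : R, 1 <= Cst /\
          forall (n : nat) (a : nat -> nat -> Cplx) (N : R),
            (1 <= n)%nat -> is_Pnorm n a N ->
            coef_lr n a r <= Cst * N)).
Proof.
  split.
  - intros n a N _ HN i j Hij Hj.
    pose proof (coef_le_2Pnorm n a N i j HN Hij Hj).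
    pose proof (coef_le_2Pnorm n a N j j HN (le_n j) Hj).
    pose proof (Cmod_ge0 (a j j)); pose proof two_le_4_div_sqrt_PI; nra.
  - intros r Hr [Cst [HCst Hbound]].
    destruct (exists_nat_gt (Rpower Cst r)) as [n [Hn Hlt]].
    specialize (Hbound n sum_squares_coef 1 Hn (Pnorm_sum_squares n Hn)).
    rewrite coef_lr_sum_squares in Hbound by easy.
    pose proof (Rpower_root_lt Cst (INR n) r ltac:(lra) Hr Hlt); lra.
Qed.
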